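(* Let $k\in\{1,2,\dots\}\cup\{\infty\}$, $a,b>0$, $f\in D^k(\mathbb{R},0)$, $\tau_1=f'(0)$, and $q=w_b\circ f\circ w_a\in H^k(\mathbb{R},0)$. (a) If $\tau_1>0$, then $q$ is $C^1$ if and only if $a=1/b$. (b) If $\tau_1<0$, then $q$ is $C^1$ if and only if $a=b$. (c) Suppose $q$ is $C^1$, $a,b\neq1$, and $n$ is an integer with $2\le n\le k$. Then $q$ is $C^n$ if and only if $f''(0)=\cdots=f^{(n)}(0)=0$.
   Context: $H^k(\mathbb{R},0)$ is the group of homeomorphisms $h$ of $\mathbb{R}$ with $h(0)=0$ whose restriction to $\mathbb{R}\setminus\{0\}$ is a $C^k$-diffeomorphism of $\mathbb{R}\setminus\{0\}$; $D^k(\mathbb{R},0)$ is its subgroup of $C^k$-diffeomorphisms of $\mathbb{R}$. For $c>0$, $w_c\colon\mathbb{R}\to\mathbb{R}$ is $w_c(x)=x$ for $x\le0$ and $w_c(x)=cx$ for $x>0$. *)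

From Stdlib Require Import Reals Lra.
From Coquelicot Require Import Coquelicot.
Open Scope R_scope.

(* Smoothness index k in {0,1,2,...} u {oo}: Some n = n, None = infinity. *)
Definition le_ext (n : nat) (k : option nat) : Prop :=
  match k with Some m => (n <= m)%nat | None => True end.

(* Derivatives are local, so for
   U open this is C^n-ness of the restriction of f to U. *)
Definition Cn_on (U : R -> Prop) (n : nat) (f : R -> R) : Prop :=
  forall m, (m <= n)%nat -> forall x, U x ->
    ex_derive_n f m x /\ continuous (Derive_n f m) x.

Definition Ck_on (U : R -> Prop) (k : option nat) (f : R -> R) : Prop :=
  forall n, le_ext n k -> Cn_on U n f.

Definition everywhere : R -> Prop := fun _ => True.
Definition punctured : R -> Prop := fun x => x <> 0.

Definition Cn (n : nat) (f : R -> R) : Prop := Cn_on everywhere n f.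

(* H^k(R,0): homeomorphisms h of R with h 0 = 0 whose restriction to R\{0}
   is a C^k-diffeomorphism of R\{0} (the inverse of the restriction is the
   restriction of the inverse g). *)
Definition Hk (k : option nat) (h : R -> R) : Prop :=
  h 0 = 0 /\
  exists g : R -> R,
    (forall x, g (h x) = x) /\ (forall y, h (g y) = y) /\
    (forall x, continuous h x) /\ (forall x, continuous g x) /\
    Ck_on punctured k h /\ Ck_on punctured k g.

Definition Dk (k : option nat) (h : R -> R) : Prop :=
  h 0 = 0 /\
  exists g : R -> R,
    (forall x, g (h x) = x) /\ (forall y, h (g y) = y) /\
    Ck_on everywhere k h /\ Ck_on everywhere k g.

Definition w (c : R) (x : R) : R := if Rle_dec x 0 then x else c * x.

From Stdlib Require Import Reals Lra Lia.
From Coquelicot Require Import Coquelicot.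
Open Scope R_scope.

(* Since f is a diffeomorphism fixing 0, f(x) has the sign of f'(0) x, so on each side of 0
   the map q is a rescaling of f: q = c1 f on (-oo, 0) and q = c2 f(a .) on (0, oo), with
   (c1, c2) = (1, b) if f'(0) > 0 and (b, 1) if f'(0) < 0.  A function glued at 0 from two
   C^n functions is C^n iff their derivatives of order <= n agree at 0, which here reads
   c1 f^(j)(0) = c2 a^j f^(j)(0).  For j = 1 this is c1 = c2 a because f'(0) <> 0; granted
   that, the condition for j >= 2 becomes c1 (1 - a^(j-1)) f^(j)(0) = 0, which forces
   f^(j)(0) = 0 when a <> 1. *)

Lemma continuous_agree_at_right (F G : R -> R) x :
  continuous F x -> continuous G x -> (forall y, x < y -> F y = G y) -> F x = G x.
Proof.
  intros HF HG E.
  apply (filterlim_locally_unique (F := at_right x) G).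
  - apply filterlim_within_ext with F; [exact E|].
    exact (filterlim_filter_le_1 _ (filter_le_within _) HF).
  - exact (filterlim_filter_le_1 _ (filter_le_within _) HG).
Qed.

Lemma continuous_agree_at_left (F G : R -> R) x :
  continuous F x -> continuous G x -> (forall y, y < x -> F y = G y) -> F x = G x.
Proof.
  intros HF HG E.
  apply (filterlim_locally_unique (F := at_left x) G).
  - apply filterlim_within_ext with F; [exact E|].
    exact (filterlim_filter_le_1 _ (filter_le_within _) HF).
  - exact (filterlim_filter_le_1 _ (filter_le_within _) HG).
Qed.

Definition piecewise (A B : R -> R) (y : R) : R := if Rlt_dec y 0 then A y else B y.

Lemma piecewise_lt A B y : y < 0 -> piecewise A B y = A y.
Proof. intros Hy. unfold piecewise. destruct Rlt_dec; [reflexivity | lra]. Qed.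

Lemma piecewise_ge A B y : 0 <= y -> piecewise A B y = B y.
Proof. intros Hy. unfold piecewise. destruct Rlt_dec; [lra | reflexivity]. Qed.

Lemma piecewise_locally_lt A B y : y < 0 -> locally y (fun z => A z = piecewise A B z).
Proof.
  intros Hy. apply filter_imp with (fun z => z < 0); [|exact (open_lt 0 y Hy)].
  intros z Hz. symmetry. apply piecewise_lt, Hz.
Qed.

Lemma piecewise_locally_gt A B y : 0 < y -> locally y (fun z => B z = piecewise A B z).
Proof.
  intros Hy. apply filter_imp with (fun z => 0 < z); [|exact (open_gt 0 y Hy)].
  intros z Hz. symmetry. apply piecewise_ge. lra.
Qed.

Lemma continuous_piecewise_0 A B :
  continuous A 0 -> continuous B 0 -> A 0 = B 0 -> continuous (piecewise A B) 0.
Proof.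
  intros HA HB E. apply filterlim_locally. intros eps.
  rewrite piecewise_ge by lra.
  apply filter_imp with (fun y => ball (A 0) eps (A y) /\ ball (B 0) eps (B y)).
  - intros y [Ay By]. unfold piecewise. destruct Rlt_dec; [rewrite <- E|]; assumption.
  - apply filter_and.
    + exact (proj1 (filterlim_locally A (A 0)) HA eps).
    + exact (proj1 (filterlim_locally B (B 0)) HB eps).
Qed.

Lemma is_derive_piecewise_0 A B l :
  A 0 = B 0 -> is_derive A 0 l -> is_derive B 0 l -> is_derive (piecewise A B) 0 l.
Proof.
  intros E [Hlin HA] [_ HB]. split; [exact Hlin|].
  intros x Hx. apply (@is_filter_lim_locally_unique R_AbsRing R_NormedModule) in Hx.
  subst x. intros eps. rewrite piecewise_ge by lra.
  apply filter_imp with (fun y =>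
    norm (minus (minus (A y) (A 0)) (scal (minus y 0) l)) <= eps * norm (minus y 0) /\
    norm (minus (minus (B y) (B 0)) (scal (minus y 0) l)) <= eps * norm (minus y 0)).
  - intros y [Ay By]. unfold piecewise. destruct Rlt_dec; [rewrite <- E|]; assumption.
  - apply filter_and; [apply HA | apply HB]; intros P HP; exact HP.
Qed.

Lemma continuous_piecewise A B y :
  (forall x, continuous A x) -> (forall x, continuous B x) -> A 0 = B 0 ->
  continuous (piecewise A B) y.
Proof.
  intros HA HB E. destruct (Rtotal_order y 0) as [Hy|[->|Hy]].
  - apply continuous_ext_loc with A; [apply piecewise_locally_lt, Hy | apply HA].
  - apply continuous_piecewise_0; auto.
  - apply continuous_ext_loc with B; [apply piecewise_locally_gt, Hy | apply HB].
Qed.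

Lemma is_derive_piecewise A B y :
  (forall x, ex_derive A x) -> (forall x, ex_derive B x) ->
  A 0 = B 0 -> Derive A 0 = Derive B 0 ->
  is_derive (piecewise A B) y (piecewise (Derive A) (Derive B) y).
Proof.
  intros HA HB E0 E1. destruct (Rtotal_order y 0) as [Hy|[->|Hy]].
  - rewrite piecewise_lt by exact Hy.
    apply is_derive_ext_loc with A; [apply piecewise_locally_lt, Hy | apply Derive_correct, HA].
  - rewrite piecewise_ge by lra. apply is_derive_piecewise_0; [exact E0| |apply Derive_correct, HB].
    rewrite <- E1. apply Derive_correct, HA.
  - rewrite piecewise_ge by lra.
    apply is_derive_ext_loc with B; [apply piecewise_locally_gt, Hy | apply Derive_correct, HB].
Qed.

Lemma Cn_ext n f g : (forall x, f x = g x) -> Cn n f -> Cn n g.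
Proof.
  intros E Hf m Hm x _. destruct (Hf m Hm x I) as [Dm Cm]. split.
  - exact (ex_derive_n_ext f g m x E Dm).
  - apply continuous_ext with (Derive_n f m); [|exact Cm].
    intros t. apply Derive_n_ext, E.
Qed.

Lemma Derive_n_piecewise n A B :
  Cn n A -> Cn n B -> (forall j, (j <= n)%nat -> Derive_n A j 0 = Derive_n B j 0) ->
  forall m, (m <= n)%nat -> forall y,
    Derive_n (piecewise A B) m y = piecewise (Derive_n A m) (Derive_n B m) y.
Proof.
  intros HA HB E. induction m as [|m IH]; intros Hm y; [reflexivity|].
  change (Derive (Derive_n (piecewise A B) m) y
          = piecewise (Derive_n A (S m)) (Derive_n B (S m)) y).
  rewrite (Derive_ext _ _ y (IH ltac:(lia))).
  apply is_derive_unique, is_derive_piecewise.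
  - intros x. exact (proj1 (HA (S m) Hm x I)).
  - intros x. exact (proj1 (HB (S m) Hm x I)).
  - apply E. lia.
  - exact (E (S m) Hm).
Qed.

Lemma Cn_piecewise_iff n A B :
  Cn n A -> Cn n B ->
  (Cn n (piecewise A B) <-> forall j, (j <= n)%nat -> Derive_n A j 0 = Derive_n B j 0).
Proof.
  intros HA HB. split.
  - intros Hpw j Hj. transitivity (Derive_n (piecewise A B) j 0).
    + apply continuous_agree_at_left;
        [exact (proj2 (HA j Hj 0 I)) | exact (proj2 (Hpw j Hj 0 I)) |].
      intros y Hy. apply Derive_n_ext_loc, piecewise_locally_lt, Hy.
    + apply continuous_agree_at_right;
        [exact (proj2 (Hpw j Hj 0 I)) | exact (proj2 (HB j Hj 0 I)) |].
      intros y Hy. symmetry. apply Derive_n_ext_loc, piecewise_locally_gt, Hy.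
  - intros E m Hm x _.
    assert (Dpw : forall y,
      Derive_n (piecewise A B) m y = piecewise (Derive_n A m) (Derive_n B m) y)
      by exact (Derive_n_piecewise n A B HA HB E m Hm).
    split.
    + destruct m as [|m]; [exact I|].
      change (ex_derive (Derive_n (piecewise A B) m) x).
      apply ex_derive_ext with (piecewise (Derive_n A m) (Derive_n B m)).
      { intros t. symmetry. apply (Derive_n_piecewise n A B HA HB E). lia. }
      eexists. apply is_derive_piecewise.
      * intros z. exact (proj1 (HA (S m) Hm z I)).
      * intros z. exact (proj1 (HB (S m) Hm z I)).
      * apply E. lia.
      * exact (E (S m) Hm).
    + apply continuous_ext with (piecewise (Derive_n A m) (Derive_n B m)).
      { intros t. symmetry. apply Dpw. }
      apply continuous_piecewise.
      * intros z. exact (proj2 (HA m Hm z I)).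
      * intros z. exact (proj2 (HB m Hm z I)).
      * exact (E m Hm).
Qed.

Lemma Derive_n_scal_comp n m f c d x :
  Cn n f -> (m <= n)%nat ->
  Derive_n (fun y => c * f (d * y)) m x = c * (d ^ m * Derive_n f m (d * x)).
Proof.
  intros Hf Hm. rewrite Derive_n_scal_l, Derive_n_comp_scal; [reflexivity|].
  apply filter_forall. intros t j Hj. exact (proj1 (Hf j ltac:(lia) t I)).
Qed.

Lemma Cn_scal_comp n f c d : Cn n f -> Cn n (fun x => c * f (d * x)).
Proof.
  intros Hf m Hm x _. split.
  - apply ex_derive_n_scal_l with (f := fun y => f (d * y)), ex_derive_n_comp_scal.
    apply filter_forall. intros t j Hj. exact (proj1 (Hf j ltac:(lia) t I)).
  - apply continuous_ext with (fun y => c * (d ^ m * Derive_n f m (d * y))).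
    { intros t. symmetry. exact (Derive_n_scal_comp n m f c d t Hf Hm). }
    apply (continuous_mult (fun _ => c)); [apply continuous_const|].
    apply (continuous_mult (fun _ => d ^ m)); [apply continuous_const|].
    apply continuous_comp with (f := fun y => d * y); [|exact (proj2 (Hf m Hm _ I))].
    apply (continuous_mult (fun _ => d)); [apply continuous_const | apply continuous_id].
Qed.

Definition glued (c1 c2 a : R) (f q : R -> R) : Prop :=
  q 0 = 0 /\ (forall y, y < 0 -> q y = c1 * f y) /\ (forall y, 0 < y -> q y = c2 * f (a * y)).

Lemma Cn_glued_iff n c1 c2 a f q :
  Cn n f -> f 0 = 0 -> glued c1 c2 a f q ->
  (Cn n q <->
   forall j, (j <= n)%nat -> c1 * Derive_n f j 0 = c2 * (a ^ j * Derive_n f j 0)).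
Proof.
  intros Hf f0 [q0 [Hlt Hgt]].
  set (L := fun y => c1 * f (1 * y)). set (M := fun y => c2 * f (a * y)).
  assert (Hq : forall x, piecewise L M x = q x).
  { intros x. unfold piecewise, L, M. destruct Rlt_dec as [Hx|Hx].
    - rewrite Rmult_1_l. symmetry. apply Hlt, Hx.
    - destruct (Rtotal_order x 0) as [|[->|Hx']]; [lra| |symmetry; apply Hgt, Hx'].
      rewrite q0, Rmult_0_r, f0. ring. }
  assert (Hjet : forall j, (j <= n)%nat ->
    (Derive_n L j 0 = Derive_n M j 0 <-> c1 * Derive_n f j 0 = c2 * (a ^ j * Derive_n f j 0))).
  { intros j Hj. unfold L, M. rewrite !(Derive_n_scal_comp n j) by assumption.
    rewrite pow1, !Rmult_1_l, !Rmult_0_r. reflexivity. }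
  split.
  - intros Cq j Hj. apply Hjet; [exact Hj|]. revert j Hj. apply Cn_piecewise_iff.
    1-2: apply Cn_scal_comp, Hf.
    apply Cn_ext with q; [intros x; symmetry; apply Hq | exact Cq].
  - intros E. apply Cn_ext with (piecewise L M); [exact Hq|].
    apply Cn_piecewise_iff; [apply Cn_scal_comp, Hf | apply Cn_scal_comp, Hf |].
    intros j Hj. apply Hjet; auto.
Qed.

Lemma Cn1_glued_iff c1 c2 a f q :
  Cn 1 f -> f 0 = 0 -> Derive f 0 <> 0 -> glued c1 c2 a f q -> (Cn 1 q <-> c1 = c2 * a).
Proof.
  intros Hf f0 Df Hq. rewrite (Cn_glued_iff 1 c1 c2 a f q Hf f0 Hq). split.
  - intros H. specialize (H 1%nat (le_n 1)).
    change (c1 * Derive f 0 = c2 * (a ^ 1 * Derive f 0)) in H.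
    apply (Rmult_eq_reg_r (Derive f 0)); [rewrite H; ring | exact Df].
  - intros -> j Hj. destruct j as [|[|j]]; [simpl; rewrite f0; ring | simpl; ring | lia].
Qed.

Lemma pow_neq_1 a j : 0 < a -> a <> 1 -> (0 < j)%nat -> a ^ j <> 1.
Proof.
  intros Ha Ha1 Hj E. destruct (pow_R1 a j E) as [Habs|]; [|lia].
  rewrite Rabs_right in Habs; lra.
Qed.

Lemma rescaled_eq_iff_0 c a j D :
  c <> 0 -> 0 < a -> a <> 1 -> (2 <= j)%nat -> (c * a * D = c * (a ^ j * D) <-> D = 0).
Proof.
  intros Hc Ha Ha1 Hj. split; [|intros ->; ring]. intros H.
  destruct j as [|[|j]]; [lia | lia|].
  assert (Hp : 1 - a ^ S j <> 0) by (pose proof (pow_neq_1 a (S j) Ha Ha1 ltac:(lia)); lra).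
  apply (Rmult_eq_reg_l (c * a * (1 - a ^ S j))).
  - replace (c * a * (1 - a ^ S j) * D) with (c * a * D - c * (a ^ S (S j) * D)) by (simpl; ring).
    rewrite H. ring.
  - repeat apply Rmult_integral_contrapositive_currified; lra.
Qed.

Lemma Cn_glued_iff_flat n c1 c2 a f q :
  Cn n f -> f 0 = 0 -> glued c1 c2 a f q -> c1 = c2 * a -> c1 <> 0 -> 0 < a -> a <> 1 ->
  (Cn n q <-> forall j, (2 <= j <= n)%nat -> Derive_n f j 0 = 0).
Proof.
  intros Hf f0 Hq Hc Hc1 Ha Ha1. rewrite (Cn_glued_iff n c1 c2 a f q Hf f0 Hq). subst c1.
  assert (Hc2 : c2 <> 0) by (intros ->; apply Hc1; ring).
  split.
  - intros H j Hj. apply (rescaled_eq_iff_0 c2 a j); auto; [lia|]. apply H. lia.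
  - intros H j Hj. destruct j as [|[|j]]; [simpl; rewrite f0; ring | simpl; ring |].
    apply (rescaled_eq_iff_0 c2 a); auto; [lia|]. apply H. lia.
Qed.

Lemma pos_of_derive_pos f t :
  (forall x, continuous f x) -> (forall x, f x = 0 -> x = 0) -> f 0 = 0 ->
  is_derive f 0 t -> 0 < t -> forall x, 0 < x -> 0 < f x.
Proof.
  intros Hc Hz f0 Df Ht x Hx.
  apply is_derive_Reals in Df. destruct (Df t Ht) as [d Hd].
  assert (Hnear : forall h, 0 < h < d -> 0 < f h).
  { intros h Hh. specialize (Hd h ltac:(lra) ltac:(rewrite Rabs_right; lra)).
    rewrite Rplus_0_l, f0, Rminus_0_r in Hd.
    replace (f h) with (f h / h * h) by (field; lra).
    apply Rmult_lt_0_compat; [|lra]. revert Hd. split_Rabs; lra. }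
  set (h := Rmin x (d / 2)).
  pose proof (cond_pos d) as Hd_pos.
  assert (Hh : 0 < h <= x) by (split; [apply Rmin_pos; lra | apply Rmin_l]).
  assert (Hfh : 0 < f h)
    by (apply Hnear; split; [lra | eapply Rle_lt_trans; [apply Rmin_r | lra]]).
  destruct (Rlt_le_dec 0 (f x)) as [|Hfx]; [assumption|exfalso].
  (* f changes sign on [h, x], so it vanishes away from 0 *)
  destruct (IVT_gen f h x 0) as [z [Hzhx Hfz]].
  - intros y. apply continuity_pt_filterlim, Hc.
  - unfold Rmin, Rmax. destruct Rle_dec; lra.
  - apply Hz in Hfz. unfold Rmin in Hzhx. destruct Rle_dec; lra.
Qed.

Lemma sign_of_derive_pos f t :
  (forall x, continuous f x) -> (forall x, f x = 0 -> x = 0) -> f 0 = 0 ->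
  is_derive f 0 t -> 0 < t -> (forall x, 0 < x -> 0 < f x) /\ (forall x, x < 0 -> f x < 0).
Proof.
  intros Hc Hz f0 Df Ht. split; [exact (pos_of_derive_pos f t Hc Hz f0 Df Ht)|].
  intros x Hx.
  assert (Hrefl : 0 < - f (- - x)).
  { apply (pos_of_derive_pos (fun y => - f (- y)) t); [| | | |exact Ht|lra].
    - intros y. apply (continuous_opp (fun y => f (- y))).
      apply continuous_comp with (f := fun y => - y); [|apply Hc].
      apply (@ex_derive_continuous R_AbsRing R_NormedModule). auto_derive. exact I.
    - intros y Hy. assert (- y = 0) by (apply Hz; lra). lra.
    - rewrite Ropp_0, f0. apply Ropp_0.
    - replace t with (opp (scal (-1) t)) by (unfold opp, scal; simpl; unfold mult; simpl; ring).
      apply (is_derive_opp (fun y => f (- y))), (is_derive_comp f (fun y => - y)).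
      + rewrite Ropp_0. exact Df.
      + auto_derive; [exact I | reflexivity]. }
  rewrite Ropp_involutive in Hrefl. lra.
Qed.

Lemma sign_of_derive_neg f t :
  (forall x, continuous f x) -> (forall x, f x = 0 -> x = 0) -> f 0 = 0 ->
  is_derive f 0 t -> t < 0 -> (forall x, 0 < x -> f x < 0) /\ (forall x, x < 0 -> 0 < f x).
Proof.
  intros Hc Hz f0 Df Ht.
  destruct (sign_of_derive_pos (fun x => - f x) (- t)) as [Sp Sn].
  - intros x. exact (continuous_opp f x (Hc x)).
  - intros x Hx. apply Hz. lra.
  - rewrite f0. apply Ropp_0.
  - exact (is_derive_opp f 0 t Df).
  - lra.
  - split; intros x Hx; [specialize (Sp x Hx) | specialize (Sn x Hx)]; lra.
Qed.

Lemma Dk_Cn k f n : Dk k f -> le_ext n k -> Cn n f.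
Proof. intros [_ [g [_ [_ [Hf _]]]]]. exact (Hf n). Qed.

Lemma Dk_zero_only_at_0 k f x : Dk k f -> f x = 0 -> x = 0.
Proof.
  intros [f0 [g [Hgf _]]] Hx. rewrite <- (Hgf x), <- (Hgf 0), Hx, f0. reflexivity.
Qed.

Lemma Dk_Derive_neq_0 k f x : le_ext 1 k -> Dk k f -> Derive f x <> 0.
Proof.
  intros Hk [_ [g [Hgf [_ [Hf Hg]]]]] Df.
  assert (E : Derive (fun y => g (f y)) x = 1).
  { rewrite (Derive_ext _ id x Hgf). apply Derive_id. }
  rewrite Derive_comp, Df in E; [lra|..].
  - exact (proj1 (Hg 1%nat Hk 1%nat (le_n 1) (f x) I)).
  - exact (proj1 (Hf 1%nat Hk 1%nat (le_n 1) x I)).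
Qed.

Lemma w_nonpos c x : x <= 0 -> w c x = x.
Proof. intros Hx. unfold w. destruct Rle_dec; [reflexivity | lra]. Qed.

Lemma w_pos c x : 0 < x -> w c x = c * x.
Proof. intros Hx. unfold w. destruct Rle_dec; [lra | reflexivity]. Qed.

Lemma glued_w_pos a b f :
  0 < a -> f 0 = 0 -> (forall x, 0 < x -> 0 < f x) -> (forall x, x < 0 -> f x < 0) ->
  glued 1 b a f (fun x => w b (f (w a x))).
Proof.
  intros Ha f0 Hpos Hneg. split; [|split]; cbv beta.
  - rewrite (w_nonpos a 0), f0, (w_nonpos b 0); lra.
  - intros y Hy. rewrite (w_nonpos a y), w_nonpos by (try apply Rlt_le, Hneg; lra). ring.
  - intros y Hy. rewrite (w_pos a y), w_pos by (try apply Hpos; nra). reflexivity.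
Qed.

Lemma glued_w_neg a b f :
  0 < a -> f 0 = 0 -> (forall x, 0 < x -> f x < 0) -> (forall x, x < 0 -> 0 < f x) ->
  glued b 1 a f (fun x => w b (f (w a x))).
Proof.
  intros Ha f0 Hpos Hneg. split; [|split]; cbv beta.
  - rewrite (w_nonpos a 0), f0, (w_nonpos b 0); lra.
  - intros y Hy. rewrite (w_nonpos a y), w_pos by (try apply Hneg; lra). reflexivity.
  - intros y Hy. rewrite (w_pos a y), w_nonpos by (try apply Rlt_le, Hpos; nra). ring.
Qed.

Lemma glued_w_of_Dk k a b f :
  le_ext 1 k -> 0 < a -> Dk k f ->
  (0 < Derive f 0 -> glued 1 b a f (fun x => w b (f (w a x)))) /\
  (Derive f 0 < 0 -> glued b 1 a f (fun x => w b (f (w a x)))).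
Proof.
  intros Hk1 Ha Hf.
  pose proof (proj1 Hf) as f0.
  pose proof (Dk_Cn k f 1 Hf Hk1) as Cf1.
  assert (Hc : forall x, continuous f x) by (intros x; exact (proj2 (Cf1 0%nat (le_0_n 1) x I))).
  assert (Df : is_derive f 0 (Derive f 0))
    by exact (Derive_correct f 0 (proj1 (Cf1 1%nat (le_n 1) 0 I))).
  assert (Hz : forall x, f x = 0 -> x = 0) by (intros x; apply (Dk_zero_only_at_0 k), Hf).
  split; intros Hsign.
  - destruct (sign_of_derive_pos f _ Hc Hz f0 Df Hsign). apply glued_w_pos; auto.
  - destruct (sign_of_derive_neg f _ Hc Hz f0 Df Hsign). apply glued_w_neg; auto.
Qed.

Theorem lemma5p16 (k : option nat) (a b : R) (f : R -> R) :
  le_ext 1 k -> 0 < a -> 0 < b -> Dk k f ->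
  let tau1 := Derive f 0 in
  let q := fun x => w b (f (w a x)) in
  (tau1 > 0 -> (Cn 1 q <-> a = 1 / b)) /\
  (tau1 < 0 -> (Cn 1 q <-> a = b)) /\
  (Cn 1 q -> a <> 1 -> b <> 1 ->
     forall n : nat, (2 <= n)%nat -> le_ext n k ->
       (Cn n q <-> forall j : nat, (2 <= j <= n)%nat -> Derive_n f j 0 = 0)).
Proof.
  intros Hk1 Ha Hb Hf tau1 q.
  destruct (glued_w_of_Dk k a b f Hk1 Ha Hf) as [Gpos Gneg].
  assert (C1 : forall c1 c2, glued c1 c2 a f q -> (Cn 1 q <-> c1 = c2 * a)).
  { intros c1 c2. apply Cn1_glued_iff;
      [exact (Dk_Cn k f 1 Hf Hk1) | exact (proj1 Hf) | exact (Dk_Derive_neq_0 k f 0 Hk1 Hf)]. }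
  split; [|split].
  - intros Hp. rewrite (C1 _ _ (Gpos Hp)).
    split; intros E; [|rewrite E]; field_simplify_eq; lra.
  - intros Hn. rewrite (C1 _ _ (Gneg Hn)). split; intros; lra.
  - intros Hq1 Ha1 _ n Hn Hkn.
    pose proof (Dk_Cn k f n Hf Hkn) as Cfn.
    destruct (Rdichotomy tau1 0 (Dk_Derive_neq_0 k f 0 Hk1 Hf)) as [Hneg|Hpos].
    + apply (Cn_glued_iff_flat n b 1 a f q Cfn (proj1 Hf) (Gneg Hneg)); [|lra|assumption..].
      apply C1; [apply Gneg, Hneg | exact Hq1].
    + apply (Cn_glued_iff_flat n 1 b a f q Cfn (proj1 Hf) (Gpos Hpos)); [|lra|assumption..].
      apply C1; [apply Gpos, Hpos | exact Hq1].
Qed.
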